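(* Let $\pi$ be an $r$-homogeneous strongly log-concave distribution with $r\ge 2$ and associated matroid $\mathcal{M}$. Let $f^{(2)}:\mathcal{M}(2)\to\mathbb{R}_{\ge0}$ and $f^{(1)}=P^{\uparrow}_1 f^{(2)}$, i.e. $f^{(1)}(v)=\sum_{S\in\mathcal{M}(2),v\in S}\frac{w(S)}{w(\{v\})}f^{(2)}(S)$. Then $$\mathrm{Ent}_{\pi_2}(f^{(2)})\ge 2\,\mathrm{Ent}_{\pi_1}(f^{(1)}).$$
   Context: $\pi:2^{[n]}\to\mathbb{R}_{\ge0}$ has generating polynomial $g_\pi(x)=\sum_S\pi(S)\prod_{i\in S}x_i$; $r$-homogeneous means the support consists of $r$-sets; strongly log-concave means for every $J\subseteq[n]$, $\nabla^2\log(\partial_J g_\pi)$ is negative semidefinite at the all-ones vector. The support $\mathcal{B}$ is the set of bases of a rank-$r$ matroid $\mathcal{M}=(E,\mathcal{I})$; $\mathcal{M}(k)$ = independent sets of size $k$. Weights: $w(I)=(r-|I|)!\sum_{B\in\mathcal{B},B\supseteq I}\pi(B)$ for $I\in\mathcal{I}$; $\pi_k(I)=w(I)/\sum_{I'\in\mathcal{M}(k)}w(I')$ on $\mathcal{M}(k)$ (identify $\mathcal{M}(1)$ with elements $v$). $\mathrm{Ent}_\mu(f)=\mathbb{E}_\mu(f\log f)-\mathbb{E}_\mu f\log\mathbb{E}_\mu f$ with $0\log0=0$. *)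

From mathcomp Require Import all_boot all_order all_algebra.
From mathcomp Require Import mpoly.
From mathcomp Require Import reals exp.

Set Implicit Arguments.
Unset Strict Implicit.
Unset Printing Implicit Defensive.

Import Order.TTheory GRing.Theory Num.Theory.
Local Open Scope ring_scope.

Section SLC.
Variables (R : realType) (n : nat).

Definition gen_poly (pi : {set 'I_n} -> R) : {mpoly R[n]} :=
  \sum_(S : {set 'I_n}) pi S *: \prod_(i in S) 'X_i.

Definition homogeneous (r : nat) (pi : {set 'I_n} -> R) : Prop :=
  forall S, pi S != 0 -> #|S| = r.

Definition partialJ (J : {set 'I_n}) (p : {mpoly R[n]}) : {mpoly R[n]} :=
  foldr (fun i q => mderiv i q) p (enum J).

Definition ones : 'I_n -> R := fun _ => 1.

(* Hessian of log p, evaluated at the all-ones vector: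
   d_i d_j log p = (p * d_i d_j p - d_i p * d_j p) / p^2. *)
Definition hess_log_at1 (p : {mpoly R[n]}) (i j : 'I_n) : R :=
  let P := p.@[ones] in
  (P * (mderiv i (mderiv j p)).@[ones]
     - (mderiv i p).@[ones] * (mderiv j p).@[ones]) / P ^+ 2.

Definition neg_semidef (M : 'I_n -> 'I_n -> R) : Prop :=
  forall v : 'I_n -> R, \sum_(i < n) \sum_(j < n) v i * M i j * v j <= 0.

Definition strongly_log_concave (pi : {set 'I_n} -> R) : Prop :=
  forall J : {set 'I_n}, neg_semidef (hess_log_at1 (partialJ J (gen_poly pi))).

(* associated matroid: bases = support of pi; independent = subsets of bases *)
Definition indep (pi : {set 'I_n} -> R) (I : {set 'I_n}) : bool :=
  [exists B : {set 'I_n}, (pi B != 0) && (I \subset B)].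

Definition Mk (pi : {set 'I_n} -> R) (k : nat) : {set {set 'I_n}} :=
  [set I | indep pi I & #|I| == k].

Definition wt (r : nat) (pi : {set 'I_n} -> R) (I : {set 'I_n}) : R :=
  ((r - #|I|)`!)%:R * \sum_(B : {set 'I_n} | I \subset B) pi B.

Definition pik (r : nat) (pi : {set 'I_n} -> R) (k : nat) (I : {set 'I_n}) : R :=
  if I \in Mk pi k then wt r pi I / \sum_(I' in Mk pi k) wt r pi I' else 0.

Definition up1 (r : nat) (pi : {set 'I_n} -> R) (f2 : {set 'I_n} -> R)
  (v : 'I_n) : R :=
  \sum_(S in Mk pi 2 | v \in S) wt r pi S / wt r pi [set v] * f2 S.

End SLC.

Definition xlogx (R : realType) (x : R) : R := if x == 0 then 0 else x * ln x.

Definition Ent (R : realType) (T : finType) (mu f : T -> R) : R :=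
  \sum_(x : T) mu x * xlogx (f x) - xlogx (\sum_(x : T) mu x * f x).

(* Weight ordered pairs (v, u) of distinct elements by p(v, u) ∝ Σ_{B ⊇ {v,u}} π(B).
   Then π_2 is the image of p on unordered pairs, π_1 is its marginal q, and
   f^(1) is the conditional expectation of F(v, u) = f^(2)({v, u}) given v.
   Strong log-concavity is only used at J = ∅: the Hessian of log g_π at 1 being
   negative semidefinite reads P·xᵀCx ≤ (d·x)², where P, d, C are g_π and its
   first and second derivatives at 1; centering x and using C1 = (r-1)d and
   Σ d = rP sharpens this to the second-moment bound E_p[x(v)x(u)] ≤ (E_q x)².
   Given that bound, a log(a/b) ≥ a - b applied to a = F(v, u) and
   b = f(v)f(u)/E F yields Ent_p(F) ≥ 2 Ent_q(f). *)

From mathcomp Require Import all_boot all_order all_algebra.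
From mathcomp Require Import mpoly.
From mathcomp Require Import reals exp.
From mathcomp Require Import ring lra zify.
Set Implicit Arguments.
Unset Strict Implicit.
Import Order.TTheory GRing.Theory Num.Theory.
Local Open Scope ring_scope.

Lemma xlogxE (R : realType) (x : R) : xlogx x = x * ln x.
Proof. by rewrite /xlogx; case: eqP => // ->; rewrite mul0r. Qed.

Lemma subr_le_mul_ln_div (R : realType) (a b : R) :
  0 < a -> 0 < b -> a - b <= a * (ln a - ln b).
Proof.
move=> a0 b0; have ba0 : 0 < b / a by rewrite divr_gt0.
have := @le_ln1Dx R (b / a - 1); rewrite (addrC 1) subrK ln_div ?posrE //.
move=> /(_ _)/wrap[]; first lra.
move=> hl; have := ler_wpM2l (ltW a0) hl.
rewrite !mulrBr mulr1 [a * (b / a)]mulrC divfK ?gt_eqF //; lra.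
Qed.

Section PairEntropy.
Variables (R : realType) (T : finType) (p F : T -> T -> R) (q f : T -> R).
Hypotheses (p_ge0 : forall v u, 0 <= p v u) (p_sym : forall v u, p v u = p u v).
Hypotheses (F_sym : forall v u, F v u = F u v)
  (pF_ge0 : forall v u, 0 <= p v u * F v u) (f_ge0 : forall v, 0 <= f v).
Hypothesis marginal : forall v, q v * f v = \sum_u p v u * F v u.

Let m := \sum_v \sum_u p v u * F v u.

Lemma two_marginal_xlogx :
  2 * \sum_v q v * xlogx (f v) =
  \sum_v \sum_u p v u * F v u * (ln (f v) + ln (f u)).
Proof.
have qE v : q v * xlogx (f v) = \sum_u p v u * F v u * ln (f v).
  by rewrite xlogxE mulrA marginal mulr_suml.
have swap : \sum_v \sum_u p v u * F v u * ln (f v)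
          = \sum_v \sum_u p v u * F v u * ln (f u).
  by rewrite exchange_big; apply: eq_bigr => v _; apply: eq_bigr => u _; rewrite p_sym F_sym.
under [RHS]eq_bigr do under eq_bigr do rewrite mulrDr.
under eq_bigr do rewrite big_split /=.
rewrite big_split /= -swap.
by rewrite (eq_bigr _ (fun v _ => qE v)) mulr2n mulrDl mul1r.
Qed.

Lemma marginal_gt0 v u : p v u * F v u != 0 -> 0 < f v.
Proof.
move=> pF0; rewrite lt_neqAle f_ge0 andbT eq_sym; apply: contra_neq pF0 => fv0.
have : \sum_u p v u * F v u == 0 by rewrite -marginal fv0 mulr0.
by rewrite psumr_eq0 // => /allP/(_ u (mem_index_enum u))/eqP.
Qed.

Lemma pair_term_le v u : 0 < m ->
  p v u * F v u - p v u * (f v * f u) / m <=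
  p v u * F v u * (ln (F v u) - (ln (f v) + ln (f u)) + ln m).
Proof.
move=> m0; have [pF0|pF0] := eqVneq (p v u * F v u) 0.
  rewrite pF0 !mul0r sub0r oppr_le0; apply: divr_ge0 (ltW m0).
  by apply: mulr_ge0 => //; apply: mulr_ge0.
have p0 : 0 < p v u.
  rewrite lt_neqAle p_ge0 andbT eq_sym; apply: contra_neq pF0 => ->.
  by rewrite mul0r.
have F0 : 0 < F v u by rewrite -(pmulr_rgt0 _ p0) lt_neqAle eq_sym pF0 pF_ge0.
have fv0 := marginal_gt0 pF0.
have fu0 : 0 < f u by apply: (@marginal_gt0 u v); rewrite p_sym F_sym.
have := subr_le_mul_ln_div F0 (divr_gt0 (mulr_gt0 fv0 fu0) m0).
rewrite ln_div ?lnM ?posrE ?mulr_gt0 // => /(ler_wpM2l (ltW p0)).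
congr (_ <= _); ring.
Qed.

Lemma pair_log_ratio_ge0 : \sum_v \sum_u p v u * (f v * f u) <= m ^+ 2 ->
  0 <= \sum_v \sum_u p v u * F v u * (ln (F v u) - (ln (f v) + ln (f u)) + ln m).
Proof.
move=> second_moment; have m_ge0 : 0 <= m by apply: sumr_ge0 => v _; apply: sumr_ge0.
have [m0|m_neq0] := eqVneq m 0.
  have pF0 v u : p v u * F v u = 0.
    move/eqP: m0; rewrite psumr_eq0; last by move=> i _; apply: sumr_ge0.
    move/allP/(_ v (mem_index_enum v)); rewrite psumr_eq0 //.
    by move/allP/(_ u (mem_index_enum u))/eqP.
  by rewrite big1 // => v _; rewrite big1 // => u _; rewrite pF0 mul0r.
have m_gt0 : 0 < m by rewrite lt_neqAle eq_sym m_neq0.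
apply: le_trans (ler_sum _ (fun v _ => ler_sum _ (fun u _ => pair_term_le v u m_gt0))).
under eq_bigr do rewrite sumrB.
rewrite sumrB -/m.
rewrite (eq_bigr (fun v => (\sum_u p v u * (f v * f u)) / m)); last first.
  by move=> v _; rewrite mulr_suml.
by rewrite -mulr_suml subr_ge0 ler_pdivrMr // -expr2.
Qed.

Lemma Ent_marginal_le_pair :
  \sum_v \sum_u p v u * (f v * f u) <= (\sum_v q v * f v) ^+ 2 ->
  2 * Ent q f <= \sum_v \sum_u p v u * xlogx (F v u) - xlogx m.
Proof.
have meanE : \sum_v q v * f v = m by apply: eq_bigr => v _; rewrite marginal.
rewrite /Ent meanE => /pair_log_ratio_ge0.
have mlnm : m * ln m = \sum_v \sum_u p v u * F v u * ln m.
  by rewrite mulr_suml; apply: eq_bigr => v _; rewrite mulr_suml.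
under eq_bigr do under eq_bigr do rewrite mulrDr mulrBr.
under eq_bigr do rewrite big_split /= sumrB.
rewrite big_split /= sumrB -mlnm -two_marginal_xlogx.
under [in X in _ <= X - _]eq_bigr do under eq_bigr do rewrite xlogxE mulrA.
rewrite xlogxE; lra.
Qed.

End PairEntropy.

Lemma quadratic_bound_centered (R : realFieldType) (T : finType)
    (C : T -> T -> R) (d : T -> R) (P k : R) :
  0 < P -> 0 < k ->
  (forall i j, C i j = C j i) ->
  (forall i, \sum_j C i j = (k - 1) * d i) ->
  \sum_i d i = k * P ->
  (forall v : T -> R,
     P * (\sum_i \sum_j v i * C i j * v j) <= (\sum_i d i * v i) ^+ 2) ->
  forall x : T -> R,
  k * P * (\sum_i \sum_j x i * C i j * x j) <= (k - 1) * (\sum_i d i * x i) ^+ 2.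
Proof.
move=> P0 k0 C_sym C_row d_sum bound x.
set D := \sum_i d i * x i; set t := D / (k * P).
(* Apply the bound to [x - t], whose [d]-weighted sum vanishes. *)
have := bound (fun i => x i - t) => /=.
have -> : \sum_i d i * (x i - t) = 0.
  under eq_bigr do rewrite mulrBr.
  rewrite sumrB -mulr_suml d_sum /t /D; field; rewrite ?mulf_neq0 ?gt_eqF //.
have CxE : \sum_i \sum_j C i j * x j = (k - 1) * D.
  rewrite exchange_big /= /D mulr_sumr; apply: eq_bigr => j _.
  under eq_bigr do rewrite C_sym.
  by rewrite -mulr_suml C_row mulrA.
have xCE : \sum_i \sum_j x i * C i j = (k - 1) * D.
  by rewrite /D mulr_sumr; apply: eq_bigr => i _; rewrite -mulr_sumr C_row; ring.
have CE : \sum_i \sum_j C i j = (k - 1) * (k * P).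
  by under eq_bigr do rewrite C_row; rewrite -mulr_sumr d_sum.
have -> : \sum_i \sum_j (x i - t) * C i j * (x j - t) =
    \sum_i \sum_j x i * C i j * x j - t * (\sum_i \sum_j C i j * x j)
    - t * (\sum_i \sum_j x i * C i j) + t ^+ 2 * (\sum_i \sum_j C i j).
  rewrite !mulr_sumr -!sumrB -big_split /=; apply: eq_bigr => i _.
  by rewrite !mulr_sumr -!sumrB -big_split /=; apply: eq_bigr => j _; ring.
rewrite CxE xCE CE expr0n /= (pmulr_rle0 _ P0) => h.
have -> : (k - 1) * D ^+ 2 =
    k * P * (2 * (t * ((k - 1) * D)) - t ^+ 2 * ((k - 1) * (k * P))).
  by rewrite /t; field; rewrite ?mulf_neq0 ?gt_eqF.
rewrite ler_pM2l ?mulr_gt0 //; lra.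
Qed.

Section Masses.
Variables (R : realType) (n : nat) (pi : {set 'I_n} -> R).

(* The values at the all-ones vector of [g_pi], [d_i g_pi] and [d_i d_j g_pi]. *)
Definition mass := \sum_(B : {set 'I_n}) pi B.
Definition mass1 (i : 'I_n) := \sum_(B : {set 'I_n} | i \in B) pi B.
Definition mass2 (i j : 'I_n) :=
  \sum_(B : {set 'I_n} | (i \in B) && (j \in B) && (i != j)) pi B.

Lemma mass2C i j : mass2 i j = mass2 j i.
Proof. by apply: eq_bigl => B; rewrite (andbC (i \in B)) eq_sym. Qed.

Lemma mass2ii i : mass2 i i = 0.
Proof. by rewrite /mass2 big1 // => B /andP[_]; rewrite eqxx. Qed.

End Masses.

Section GenPolyAtOnes.
Variables (R : realType) (n : nat).
Implicit Types (A S : {set 'I_n}) (pi : {set 'I_n} -> R).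

Local Notation "p .@[1]" := (p.@[ones R (n:=n)]) (at level 2, format "p .@[1]").

Definition mprod_set A : {mpoly R[n]} := \prod_(k in A) 'X_k.

Lemma mderivXU (i k : 'I_n) : mderiv i ('X_k : {mpoly R[n]}) = (k == i)%:R.
Proof.
rewrite mderivX mnm1E; case: eqP => [->|_]; last by rewrite scale0r.
have -> : (U_(i) - U_(i))%MM = 0%MM by apply/mnmP => j; rewrite mnmE mnm0E subnn.
by rewrite scale1r mpolyX0.
Qed.

Lemma mderiv_mprod_set i A :
  mderiv i (mprod_set A) = if i \in A then mprod_set (A :\ i) else 0.
Proof.
have mderiv_notin (B : {set 'I_n}) : i \notin B -> mderiv i (mprod_set B) = 0.
  move=> iB; apply: (big_ind (fun p : {mpoly R[n]} => mderiv i p = 0)).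
  - exact: mderivC 1.
  - by move=> x y dx dy; rewrite mderivM dx dy mul0r mulr0 addr0.
  - by move=> k kB; rewrite mderivXU; case: eqP => // ki; rewrite -ki kB in iB.
case: ifP => iA; last by rewrite mderiv_notin ?iA.
have prodD1 : \prod_(k in A | k != i) 'X_k = mprod_set (A :\ i).
  by apply: eq_bigl => k; rewrite in_setD1 andbC.
rewrite {1}/mprod_set (bigD1 i) //= prodD1 mderivM mderivXU eqxx mul1r.
by rewrite mderiv_notin ?setD11 // mulr0 addr0.
Qed.

Lemma mprod_set_ones A : (mprod_set A).@[1] = 1.
Proof.
rewrite /mprod_set (big_morph _ (mevalM _) (meval1 _)).
by apply: big1 => k _; rewrite mevalXU.
Qed.

Lemma sum_mprod_set_ones pi (h : {set 'I_n} -> {set 'I_n}) (b : pred {set 'I_n}) :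
  (\sum_S pi S *: (if b S then mprod_set (h S) else 0)).@[1] = \sum_(S | b S) pi S.
Proof.
rewrite (big_morph _ (mevalD _) (meval0 _)) [RHS]big_mkcond /=.
apply: eq_bigr => S _; rewrite mevalZ; case: (b S).
  by rewrite mprod_set_ones mulr1.
by rewrite meval0 mulr0.
Qed.

Lemma gen_poly_ones pi : (gen_poly pi).@[1] = mass pi.
Proof. exact: (sum_mprod_set_ones pi id predT). Qed.

Lemma mderiv_gen_poly_ones pi j : (mderiv j (gen_poly pi)).@[1] = mass1 pi j.
Proof.
rewrite /gen_poly [mderiv j _]raddf_sum /=.
under eq_bigr do rewrite mderivZ -/(mprod_set _) mderiv_mprod_set.
exact: (sum_mprod_set_ones pi (fun S => S :\ j) (fun S => j \in S)).
Qed.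

Lemma mderiv2_gen_poly_ones pi i j :
  (mderiv i (mderiv j (gen_poly pi))).@[1] = mass2 pi i j.
Proof.
rewrite /gen_poly [mderiv j _]raddf_sum [mderiv i _]raddf_sum /=.
under eq_bigr do rewrite mderivZ -/(mprod_set _) mderiv_mprod_set mderivZ
  (fun_if (mderiv i)) mderiv0 mderiv_mprod_set.
rewrite /mass2 -(sum_mprod_set_ones pi (fun S => S :\ j :\ i)
   (fun S => (i \in S) && (j \in S) && (i != j))).
congr meval; apply: eq_bigr => S _; rewrite in_setD1.
by case: (j \in S); case: (i \in S); case: (i != j).
Qed.

End GenPolyAtOnes.

Lemma quadratic_le_of_log_hessian (R : realFieldType) (T : finType) (P : R)
    (C : T -> T -> R) (d v : T -> R) :
  0 < P ->
  \sum_i \sum_j v i * ((P * C i j - d i * d j) / P ^+ 2) * v j <= 0 ->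
  P * (\sum_i \sum_j v i * C i j * v j) <= (\sum_i d i * v i) ^+ 2.
Proof.
move=> P0; rewrite -[_ <= (\sum_i d i * v i) ^+ 2]subr_le0.
have -> : \sum_i \sum_j v i * ((P * C i j - d i * d j) / P ^+ 2) * v j =
    (P * (\sum_i \sum_j v i * C i j * v j) - (\sum_i d i * v i) ^+ 2) / P ^+ 2.
  rewrite [X in _ - X]expr2 [X in _ - X]mulr_suml mulr_sumr -sumrB mulr_suml.
  apply: eq_bigr => i _.
  rewrite !mulr_sumr -sumrB mulr_suml; apply: eq_bigr => j _; ring.
by rewrite pmulr_lle0 // invr_gt0 exprn_gt0.
Qed.

Lemma slc_mass_quadratic_le (R : realType) (n : nat) (pi : {set 'I_n} -> R) :
  strongly_log_concave pi -> 0 < mass pi ->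
  forall v : 'I_n -> R,
  mass pi * (\sum_i \sum_j v i * mass2 pi i j * v j)
    <= (\sum_i mass1 pi i * v i) ^+ 2.
Proof.
move=> slc mass_gt0 v; have := slc set0 v.
rewrite /partialJ enum_set0 /= /hess_log_at1 gen_poly_ones.
under eq_bigr do under eq_bigr do rewrite mderiv2_gen_poly_ones !mderiv_gen_poly_ones.
exact: quadratic_le_of_log_hessian.
Qed.

Section SumsOverSmallSets.
Variables (R : realType) (n : nat).
Implicit Types (S : {set 'I_n}) (H : {set 'I_n} -> R).

Lemma sum_card1 H : \sum_(S : {set 'I_n} | #|S| == 1%N) H S = \sum_v H [set v].
Proof.
transitivity (\sum_(v in [set: 'I_n]) H [set v]); last by apply: eq_bigl => v; rewrite inE.
rewrite -(big_imset H (h := set1)) /=; last by move=> x y _ _; apply: set1_inj.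
by apply: eq_bigl => S; apply/cards1P/imsetP => [[v ->]|[v _ ->]]; exists v; rewrite ?inE.
Qed.

Lemma sum_card2_mem H v :
  \sum_(S : {set 'I_n} | (#|S| == 2%N) && (v \in S)) H S = \sum_(u | u != v) H [set v; u].
Proof.
transitivity (\sum_(u in [set u | u != v]) H [set v; u]); last first.
  by apply: eq_bigl => u; rewrite inE.
rewrite -(big_imset H (h := fun u => [set v; u])) /=; last first.
  move=> x y; rewrite !inE => xv yv e.
  have : x \in [set v; y] by rewrite -e !inE eqxx orbT.
  by rewrite !inE (negbTE xv) => /eqP.
apply: eq_bigl => S; apply/andP/imsetP => [[/cards2P [x [y [xy ->]]]]|[u]].
  rewrite !inE => /orP[] /eqP ->; first by exists y; rewrite // inE eq_sym.
  by exists x; rewrite ?inE // setUC.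
by rewrite inE => uv ->; rewrite cards2 !inE eqxx (eq_sym v u) uv.
Qed.

Lemma sum_card2 H :
  2 * \sum_(S : {set 'I_n} | #|S| == 2%N) H S = \sum_v \sum_(u | u != v) H [set v; u].
Proof.
under [RHS]eq_bigr do rewrite -sum_card2_mem.
rewrite (exchange_big_dep (fun S : {set 'I_n} => #|S| == 2%N)) /=; last by move=> v S _ /andP[].
rewrite mulr_sumr; apply: eq_bigr => S /eqP S2.
rewrite (eq_bigl (fun v => v \in S)) => [|v]; last by rewrite S2 eqxx.
by rewrite sumr_const S2 mulr_natl.
Qed.

End SumsOverSmallSets.

Section MatroidWeights.
Variables (R : realType) (n r : nat) (pi : {set 'I_n} -> R).
Hypotheses (pi_ge0 : forall S, 0 <= pi S) (pi_hom : homogeneous r pi).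
Implicit Types (S : {set 'I_n}) (u v : 'I_n).

Lemma mass_ge0 : 0 <= mass pi.
Proof. exact: sumr_ge0. Qed.

Lemma mass2_ge0 v u : 0 <= mass2 pi v u.
Proof. exact: sumr_ge0. Qed.

Lemma wt_ge0 S : 0 <= wt r pi S.
Proof. by apply: mulr_ge0; [exact: ler0n | exact: sumr_ge0]. Qed.

Lemma wt_set1 v : wt r pi [set v] = ((r - 1)`!)%:R * mass1 pi v.
Proof. by rewrite /wt cards1; congr (_ * _); apply: eq_bigl => B; rewrite sub1set. Qed.

Lemma wt_set2 v u : u != v -> wt r pi [set v; u] = ((r - 2)`!)%:R * mass2 pi v u.
Proof.
move=> uv; rewrite /wt cards2 eq_sym uv; congr (_ * _); apply: eq_bigl => B.
by rewrite subUset !sub1set eq_sym uv andbT.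
Qed.

Lemma wt_notindep S : ~~ indep pi S -> wt r pi S = 0.
Proof.
move=> notS; rewrite /wt big1 ?mulr0 // => B SB; apply/eqP.
by apply: contraNT notS => piB; apply/existsP; exists B; rewrite piB.
Qed.

Lemma sum_Mk_card k (Q : pred {set 'I_n}) (G : {set 'I_n} -> R) :
  (forall S, ~~ indep pi S -> G S = 0) ->
  \sum_(S : {set 'I_n} | (S \in Mk pi k) && Q S) G S =
  \sum_(S : {set 'I_n} | (#|S| == k) && Q S) G S.
Proof.
move=> G0; rewrite big_mkcond [RHS]big_mkcond; apply: eq_bigr => S _.
by rewrite /Mk inE; case: (boolP (indep pi S)) => //= notS; rewrite G0 //; case: ifP.
Qed.

Lemma sum_wt_Mk k :
  \sum_(I in Mk pi k) wt r pi I = \sum_(I : {set 'I_n} | #|I| == k) wt r pi I.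
Proof.
rewrite (eq_bigl (fun I => (I \in Mk pi k) && predT I)) => [|I]; last by rewrite andbT.
rewrite sum_Mk_card => [|S]; last exact: wt_notindep.
by apply: eq_bigl => I; rewrite andbT.
Qed.

Lemma sum_mass2 v : \sum_u mass2 pi v u = (r - 1)%:R * mass1 pi v.
Proof.
rewrite (exchange_big_dep (fun B : {set 'I_n} => v \in B)) /=; last by move=> u B _ /andP[/andP[]].
rewrite mulr_sumr; apply: eq_bigr => B vB.
rewrite (eq_bigl (fun u => u \in B :\ v)) => [|u]; last by rewrite in_setD1 vB /= andbC eq_sym.
rewrite sumr_const mulr_natl; have [->|piB] := eqVneq (pi B) 0; first by rewrite !mul0rn.
by congr (_ *+ _); have := cardsD1 v B; rewrite vB (pi_hom piB) add1n => ->; rewrite subn1.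
Qed.

Lemma sum_mass1 : \sum_v mass1 pi v = r%:R * mass pi.
Proof.
rewrite (exchange_big_dep predT) //= mulr_sumr; apply: eq_bigr => B _.
rewrite sumr_const mulr_natl; have [->|piB] := eqVneq (pi B) 0; first by rewrite !mul0rn.
by rewrite (pi_hom piB).
Qed.

Lemma mass2_le_mass1 v u : mass2 pi v u <= mass1 pi v.
Proof.
rewrite [leRHS]big_mkcond [leLHS]big_mkcond; apply: ler_sum => B _.
by case: (v \in B) => //=; case: ifP.
Qed.

Lemma mass2_Mk2 v u : mass2 pi v u != 0 -> [set v; u] \in Mk pi 2.
Proof.
move=> mass2_neq0; have uv : u != v.
  by apply: contraNneq mass2_neq0 => ->; rewrite mass2ii.
rewrite /Mk inE cards2 (eq_sym v u) uv andbT.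
apply: contraNT mass2_neq0 => notvu; rewrite /mass2 big1 // => B /andP[/andP[vB uB] _].
apply/eqP; apply: contraNT notvu => piB; apply/existsP; exists B.
by rewrite piB subUset !sub1set vB uB.
Qed.

End MatroidWeights.

(* The law of an ordered pair of distinct elements drawn from a random basis:
   [pik r pi 2] is its image on unordered pairs and [pik r pi 1] its marginal. *)
Definition pair_prob (R : realType) (n r : nat) (pi : {set 'I_n} -> R)
    (v u : 'I_n) : R :=
  ((r - 2)`!)%:R * mass2 pi v u / \sum_(I in Mk pi 1) wt r pi I.

Section PairLaw.
Variables (R : realType) (n r : nat) (pi : {set 'I_n} -> R).
Hypotheses (r_ge2 : (2 <= r)%N) (pi_ge0 : forall S, 0 <= pi S).
Hypothesis pi_hom : homogeneous r pi.

Local Notation K := (((r - 2)`!)%:R : R).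
Local Notation Z1 := (\sum_(I in Mk pi 1) wt r pi I).
Local Notation Z2 := (\sum_(I in Mk pi 2) wt r pi I).
Local Notation p := (pair_prob r pi).

Lemma fact_subn1 : ((r - 1)`!)%:R = K * (r - 1)%:R.
Proof.
have -> : (r - 1 = (r - 2).+1)%N by lia.
by rewrite factS natrM mulrC.
Qed.

Lemma sum_wt_Mk1 : Z1 = K * (r - 1)%:R * (r%:R * mass pi).
Proof.
rewrite sum_wt_Mk sum_card1; under eq_bigr do rewrite wt_set1 fact_subn1.
by rewrite -mulr_sumr (sum_mass1 pi_hom).
Qed.

Lemma sum_wt_Mk1_Mk2 : Z1 = 2 * Z2.
Proof.
have offdiag v : \sum_(u | u != v) mass2 pi v u = (r - 1)%:R * mass1 pi v.
  by rewrite -(sum_mass2 pi_hom) [RHS](bigD1 v) //= mass2ii add0r.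
rewrite sum_wt_Mk1 sum_wt_Mk sum_card2.
under eq_bigr => v _ do under eq_bigr => u uv do rewrite wt_set2 //.
under eq_bigr do rewrite -mulr_sumr offdiag.
by rewrite -mulr_sumr -mulr_sumr (sum_mass1 pi_hom) !mulrA.
Qed.

Lemma pik1E v : pik r pi 1 [set v] = K * (r - 1)%:R * mass1 pi v / Z1.
Proof.
rewrite /pik -fact_subn1 -wt_set1; case: ifP => // notM1.
rewrite wt_notindep ?mul0r //; apply: contraFN notM1 => indep_v.
by rewrite /Mk inE indep_v cards1.
Qed.

Lemma pair_prob_ge0 v u : 0 <= p v u.
Proof.
by rewrite /pair_prob sum_wt_Mk1 divr_ge0 ?mulr_ge0 ?ler0n ?(mass_ge0 pi_ge0) ?(mass2_ge0 pi_ge0).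
Qed.

Lemma pair_probC v u : p v u = p u v.
Proof. by rewrite /pair_prob mass2C. Qed.

Lemma pair_prob_ii v : p v v = 0.
Proof. by rewrite /pair_prob mass2ii mulr0 mul0r. Qed.

Lemma pair_prob_Mk2 v u : p v u != 0 -> [set v; u] \in Mk pi 2.
Proof.
move=> p_neq0; apply: mass2_Mk2; apply: contraNneq p_neq0 => mass2_0.
by rewrite /pair_prob mass2_0 mulr0 mul0r.
Qed.

Lemma sum_pik2 (G : {set 'I_n} -> R) :
  \sum_S pik r pi 2 S * G S = \sum_v \sum_u p v u * G [set v; u].
Proof.
have half w : 2 * (w / Z1) = w / Z2.
  by rewrite sum_wt_Mk1_Mk2 invfM mulrCA !mulrA mulfK ?pnatr_eq0.
have pik2E S : pik r pi 2 S = if #|S| == 2%N then 2 * (wt r pi S / Z1) else 0.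
  rewrite /pik half; case: ifP => [|notM2]; first by rewrite /Mk inE => /andP[_ ->].
  case: ifP => // card2; rewrite wt_notindep ?mul0r //; apply: contraFN notM2 => indepS.
  by rewrite /Mk inE indepS card2.
under eq_bigr do rewrite pik2E (fun_if (fun x => x * G _)) mul0r -mulrA.
rewrite -big_mkcond /= -mulr_sumr sum_card2; apply: eq_bigr => v _.
rewrite [RHS](bigD1 v) //= pair_prob_ii mul0r add0r; apply: eq_bigr => u uv.
by rewrite wt_set2 // /pair_prob mulrAC.
Qed.

Lemma up1_ge0 (f2 : {set 'I_n} -> R) :
  (forall S, S \in Mk pi 2 -> 0 <= f2 S) -> forall v, 0 <= up1 r pi f2 v.
Proof.
move=> f2_ge0 v; apply: sumr_ge0 => S /andP[M2S _].
by rewrite mulr_ge0 ?divr_ge0 ?wt_ge0 ?f2_ge0.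
Qed.

Lemma pik1_up1 (f2 : {set 'I_n} -> R) v :
  pik r pi 1 [set v] * up1 r pi f2 v = \sum_u p v u * f2 [set v; u].
Proof.
rewrite pik1E /up1.
rewrite (@sum_Mk_card _ _ pi 2 (fun S => v \in S)) => [|S notS]; last first.
  by rewrite wt_notindep // !mul0r.
rewrite sum_card2_mem [RHS](bigD1 v) //= pair_prob_ii mul0r add0r.
have [mass1_0|mass1_neq0] := eqVneq (mass1 pi v) 0.
  rewrite mass1_0 mulr0 !mul0r; symmetry; apply: big1 => u _.
  have : mass2 pi v u = 0.
    by apply/eqP; rewrite eq_le (mass2_ge0 pi_ge0) andbT -mass1_0 mass2_le_mass1.
  by rewrite /pair_prob => ->; rewrite mulr0 !mul0r.
rewrite mulr_sumr; apply: eq_bigr => u uv.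
rewrite wt_set1 fact_subn1 wt_set2 // /pair_prob.
set a := K * (r - 1)%:R * mass1 pi v.
have a_neq0 : a != 0.
  by rewrite !mulf_neq0 // pnatr_eq0 -?lt0n ?fact_gt0 ?subn_gt0 // (leq_trans _ r_ge2).
transitivity (a / a * (K * mass2 pi v u / Z1 * f2 [set v; u])); first by ring.
by rewrite divff // mul1r.
Qed.

Lemma pair_second_moment_le : strongly_log_concave pi -> forall x : 'I_n -> R,
  \sum_v \sum_u p v u * (x v * x u) <= (\sum_v pik r pi 1 [set v] * x v) ^+ 2.
Proof.
move=> slc x.
have [mass0|mass_neq0] := eqVneq (mass pi) 0.
  rewrite big1 ?sqr_ge0 // => v _; rewrite big1 // => u _.
  by rewrite /pair_prob sum_wt_Mk1 mass0 !mulr0 invr0 mulr0 mul0r.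
have mass_gt0 : 0 < mass pi by rewrite lt_neqAle eq_sym mass_neq0 (mass_ge0 pi_ge0).
have r_gt0 : 0 < r%:R :> R by rewrite ltr0n (leq_trans _ r_ge2).
have r1_gt0 : 0 < (r - 1)%:R :> R by rewrite ltr0n subn_gt0 (leq_trans _ r_ge2).
have K_gt0 : 0 < K by rewrite ltr0n fact_gt0.
have r1E : (r - 1)%:R = r%:R - 1 :> R by rewrite natrB // (ltnW r_ge2).
have row v : \sum_u mass2 pi v u = (r%:R - 1) * mass1 pi v.
  by rewrite (sum_mass2 pi_hom) r1E.
have := quadratic_bound_centered mass_gt0 r_gt0 (@mass2C _ _ pi) row
  (sum_mass1 pi_hom) (slc_mass_quadratic_le slc mass_gt0) x.
rewrite -r1E.
set Q := \sum_i \sum_j x i * mass2 pi i j * x j; set D := \sum_i mass1 pi i * x i.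
have -> : \sum_v \sum_u p v u * (x v * x u) = K / Z1 * Q.
  rewrite mulr_sumr; apply: eq_bigr => v _; rewrite mulr_sumr; apply: eq_bigr => u _.
  by rewrite /pair_prob; ring.
have -> : \sum_v pik r pi 1 [set v] * x v = K * (r - 1)%:R / Z1 * D.
  by rewrite mulr_sumr; apply: eq_bigr => v _; rewrite pik1E; ring.
rewrite sum_wt_Mk1; set A := r%:R * mass pi => h.
have A_gt0 : 0 < A by rewrite mulr_gt0.
have -> : K / (K * (r - 1)%:R * A) * Q = A * Q / ((r - 1)%:R * A ^+ 2).
  by field; rewrite !gt_eqF.
have -> : (K * (r - 1)%:R / (K * (r - 1)%:R * A) * D) ^+ 2
    = (r - 1)%:R * D ^+ 2 / ((r - 1)%:R * A ^+ 2).
  by field; rewrite !gt_eqF.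
by rewrite ler_pM2r // invr_gt0 mulr_gt0 // exprn_gt0.
Qed.

End PairLaw.

Theorem lemma4p2 (R : realType) (n r : nat) (pi : {set 'I_n} -> R)
    (f2 : {set 'I_n} -> R) :
  (2 <= r)%N ->
  (forall S, 0 <= pi S) ->
  homogeneous r pi ->
  strongly_log_concave pi ->
  (forall S, S \in Mk pi 2 -> 0 <= f2 S) ->
  2 * Ent (fun v : 'I_n => pik r pi 1 [set v]) (up1 r pi f2)
    <= Ent (pik r pi 2) f2.
Proof.
move=> r_ge2 pi_ge0 pi_hom slc f2_ge0.
rewrite [X in _ <= X]/Ent !sum_pik2 //.
apply: (@Ent_marginal_le_pair _ _ (pair_prob r pi) (fun v u => f2 [set v; u])).
- exact: pair_prob_ge0.
- exact: pair_probC.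
- by move=> v u; rewrite setUC.
- move=> v u; have [->|/pair_prob_Mk2 M2] := eqVneq (pair_prob r pi v u) 0.
    by rewrite mul0r.
  by rewrite mulr_ge0 ?pair_prob_ge0 ?f2_ge0.
- exact: up1_ge0.
- exact: pik1_up1.
- exact: pair_second_moment_le.
Qed.
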